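(* Let $\Sigma=(X,\mathcal{U},\phi)$ be an ordered control system which is monotone with respect to inputs and satisfies $\mathcal{U}(x)=\mathcal{U}$ for all $x\in X$. Let $\mathcal{U}_c\subseteq\mathcal{U}$, and assume: (i) there exists $\rho\in\mathcal{K}_\infty$ such that for all $x_-,x,x_+\in X$ with $x_-\le x\le x_+$ one has $\|x\|_X\le\rho(\|x_-\|_X+\|x_+\|_X)$; (ii) there exists $\eta\in\mathcal{K}_\infty$ such that for every $u\in\mathcal{U}$ there exist $u_-,u_+\in\mathcal{U}_c$ with $u_-\le u\le u_+$, $\|u_-\|_{\mathcal{U}}\le\eta(\|u\|_{\mathcal{U}})$ and $\|u_+\|_{\mathcal{U}}\le\eta(\|u\|_{\mathcal{U}})$. Then $\Sigma$ is ISS if and only if $\Sigma$ is ISS with respect to inputs in $\mathcal{U}_c$. Moreover, if $\rho$ is linear, then $\Sigma$ is exp-ISS if and only if $\Sigma$ is exp-ISS with respect to inputs in $\mathcal{U}_c$; and if in addition $\Sigma$ is exp-ISS with respect to inputs in $\mathcal{U}_c$ with a linear gain function and $\eta$ is linear, then $\Sigma$ is exp-ISS with a linear gain function.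
   Context: Comparison functions: $\mathcal{K}$ is the set of continuous strictly increasing $\gamma:\mathbb{R}_+\to\mathbb{R}_+$ with $\gamma(0)=0$; $\mathcal{K}_\infty$ the unbounded functions in $\mathcal{K}$; $\mathcal{L}$ the continuous decreasing $\gamma:\mathbb{R}_+\to\mathbb{R}_+$ with $\gamma(t)\to0$; $\mathcal{KL}$ the functions $\beta:\mathbb{R}_+^2\to\mathbb{R}_+$ with $\beta(\cdot,t)\in\mathcal{K}$ for all $t\ge0$ and $\beta(r,\cdot)\in\mathcal{L}$ for all $r>0$. A control system $\Sigma=(X,\mathcal{U},\phi)$ consists of a normed linear space $X$ (state space), a set $U$ of input values (nonempty subset of a normed linear space), a normed linear space $\mathcal{U}$ of functions $\mathbb{R}_+\to U$ closed under time shifts $u\mapsto u(\cdot+\tau)$, nonempty sets $\mathcal{U}(x)\subseteq\mathcal{U}$ of admissible inputs for each $x\in X$, and a map $\phi$ such that for every $x\in X$, $u\in\mathcal{U}(x)$ and $t\ge0$ the state $\phi(t,x,u)\in X$ is defined, $\phi(0,x,u)=x$, $\phi(t,x,u)=\phi(t,x,\tilde u)$ whenever $\tilde u\in\mathcal{U}(x)$ agrees with $u$ on $[0,t]$, and $u(t+\cdot)\in\mathcal{U}(\phi(t,x,u))$ with $\phi(h,\phi(t,x,u),u(t+\cdot))=\phi(t+h,x,u)$ for all $t,h\ge0$. A positive cone in a normed linear space $X$ is a set $K$ with $K\cap(-K)=\{0\}$, $ax\in K$ and $x+y\in K$ for all $a\ge0$, $x,y\in K$; it induces the order $x\le y\iff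 y-x\in K$. The system is ordered if $X$ and $\mathcal{U}$ carry such orders. It is monotone with respect to inputs if for all $t\ge0$, $x\in X$ and $u_1,u_2\in\mathcal{U}(x)$ with $u_1\le u_2$ one has $\phi(t,x,u_1)\le\phi(t,x,u_2)$. For $\mathcal{U}_c\subseteq\mathcal{U}$, $\Sigma$ is ISS with respect to inputs in $\mathcal{U}_c$ if there exist $\beta\in\mathcal{KL}$, $\gamma\in\mathcal{K}$ such that $\|\phi(t,x,u)\|_X\le\beta(\|x\|_X,t)+\gamma(\|u\|_{\mathcal{U}})$ for all $t\ge0$, all $x\in X$ and all $u\in\mathcal{U}(x)\cap\mathcal{U}_c$; ISS means ISS w.r.t. inputs in $\mathcal{U}$. $\Sigma$ is exp-ISS w.r.t. inputs in $\mathcal{U}_c$ if there exist constants $M,a>0$ and $\gamma\in\mathcal{K}_\infty$ with $\|\phi(t,x,u)\|_X\le Me^{-at}\|x\|_X+\gamma(\|u\|_{\mathcal{U}})$ for the same range of $t,x,u$; exp-ISS means exp-ISS w.r.t. inputs in $\mathcal{U}$; ''with a linear gain function'' means $\gamma$ can be chosen linear. *)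

From Stdlib Require Import Reals.
Open Scope R_scope.

Record NormedSpace := {
  ns_car :> Type;
  ns_zero : ns_car;
  ns_add : ns_car -> ns_car -> ns_car;
  ns_opp : ns_car -> ns_car;
  ns_scal : R -> ns_car -> ns_car;
  ns_norm : ns_car -> R;
  ns_addA : forall x y z, ns_add x (ns_add y z) = ns_add (ns_add x y) z;
  ns_addC : forall x y, ns_add x y = ns_add y x;
  ns_add0 : forall x, ns_add x ns_zero = x;
  ns_addN : forall x, ns_add x (ns_opp x) = ns_zero;
  ns_scalA : forall a b x, ns_scal a (ns_scal b x) = ns_scal (a * b) x;
  ns_scal1 : forall x, ns_scal 1 x = x;
  ns_scalDr : forall a x y, ns_scal a (ns_add x y) = ns_add (ns_scal a x) (ns_scal a y);
  ns_scalDl : forall a b x, ns_scal (a + b) x = ns_add (ns_scal a x) (ns_scal b x);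
  ns_norm_ge0 : forall x, 0 <= ns_norm x;
  ns_norm_eq0 : forall x, ns_norm x = 0 -> x = ns_zero;
  ns_norm_scal : forall a x, ns_norm (ns_scal a x) = Rabs a * ns_norm x;
  ns_norm_triangle : forall x y, ns_norm (ns_add x y) <= ns_norm x + ns_norm y
}.

Arguments ns_zero {_}.
Arguments ns_add {_} _ _.
Arguments ns_opp {_} _.
Arguments ns_scal {_} _ _.
Arguments ns_norm {_} _.

Definition is_pos_cone (X : NormedSpace) (K : X -> Prop) : Prop :=
  (forall x, K x -> K (ns_opp x) -> x = ns_zero) /\
  (forall a x, 0 <= a -> K x -> K (ns_scal a x)) /\
  (forall x y, K x -> K y -> K (ns_add x y)).

Definition cone_le (X : NormedSpace) (K : X -> Prop) (x y : X) : Prop :=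
  K (ns_add y (ns_opp x)).

Definition Rnn := {t : R | 0 <= t}.

Definition Rnn_shift (tau : R) (Htau : 0 <= tau) (s : Rnn) : Rnn :=
  exist _ (proj1_sig s + tau) (Rplus_le_le_0_compat _ _ (proj2_sig s) Htau).

Record InputSpace (V : NormedSpace) := {
  is_U : V -> Prop;
  is_U_ne : exists v, is_U v;
  is_mem : (Rnn -> V) -> Prop;
  is_norm : (Rnn -> V) -> R;
  is_mem_val : forall u, is_mem u -> forall s, is_U (u s);
  is_mem_zero : is_mem (fun _ => ns_zero);
  is_mem_add : forall u w, is_mem u -> is_mem w -> is_mem (fun s => ns_add (u s) (w s));
  is_mem_scal : forall a u, is_mem u -> is_mem (fun s => ns_scal a (u s));
  is_mem_shift : forall u tau (Htau : 0 <= tau),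
      is_mem u -> is_mem (fun s => u (Rnn_shift tau Htau s));
  is_norm_ge0 : forall u, is_mem u -> 0 <= is_norm u;
  is_norm_eq0 : forall u, is_mem u -> is_norm u = 0 -> forall s, u s = ns_zero;
  is_norm_scal : forall a u, is_mem u ->
      is_norm (fun s => ns_scal a (u s)) = Rabs a * is_norm u;
  is_norm_triangle : forall u w, is_mem u -> is_mem w ->
      is_norm (fun s => ns_add (u s) (w s)) <= is_norm u + is_norm w
}.

Arguments is_U {_} _ _.
Arguments is_mem {_} _ _.
Arguments is_norm {_} _ _.

Definition is_input_cone (V : NormedSpace) (I : InputSpace V)
    (K : (Rnn -> V) -> Prop) : Prop :=
  (forall u, K u -> is_mem I u) /\
  (forall u, K u -> K (fun s => ns_opp (u s)) -> forall s, u s = ns_zero) /\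
  (forall a u, 0 <= a -> K u -> K (fun s => ns_scal a (u s))) /\
  (forall u w, K u -> K w -> K (fun s => ns_add (u s) (w s))).

Definition input_le (V : NormedSpace) (K : (Rnn -> V) -> Prop)
    (u1 u2 : Rnn -> V) : Prop :=
  K (fun s => ns_add (u2 s) (ns_opp (u1 s))).

Record ControlSystem (X V : NormedSpace) (I : InputSpace V) := {
  cs_adm : X -> (Rnn -> V) -> Prop;
  cs_phi : R -> X -> (Rnn -> V) -> X;        (* only used for t >= 0 *)
  cs_adm_sub : forall x u, cs_adm x u -> is_mem I u;
  cs_adm_ne : forall x, exists u, cs_adm x u;
  cs_phi0 : forall x u, cs_adm x u -> cs_phi 0 x u = x;
  cs_causal : forall t x u u', 0 <= t -> cs_adm x u -> cs_adm x u' ->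
      (forall s : Rnn, proj1_sig s <= t -> u s = u' s) ->
      cs_phi t x u = cs_phi t x u';
  cs_shift_adm : forall t (Ht : 0 <= t) x u, cs_adm x u ->
      cs_adm (cs_phi t x u) (fun s => u (Rnn_shift t Ht s));
  cs_cocycle : forall t h (Ht : 0 <= t) x u, 0 <= h -> cs_adm x u ->
      cs_phi h (cs_phi t x u) (fun s => u (Rnn_shift t Ht s)) = cs_phi (t + h) x u
}.

Arguments cs_adm {_ _ _} _ _ _.
Arguments cs_phi {_ _ _} _ _ _ _.

(** * Comparison functions (functions R_+ -> R_+, encoded on R, only
    their values on [0, +oo) matter) *)
Definition cont_on_nonneg (f : R -> R) : Prop :=
  forall x, 0 <= x -> forall eps, 0 < eps -> exists delta, 0 < delta /\
    forall y, 0 <= y -> Rabs (y - x) < delta -> Rabs (f y - f x) < eps.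

Definition class_K (g : R -> R) : Prop :=
  cont_on_nonneg g /\ g 0 = 0 /\
  (forall x, 0 <= x -> 0 <= g x) /\
  (forall x y, 0 <= x -> x < y -> g x < g y).

Definition class_Kinf (g : R -> R) : Prop :=
  class_K g /\ (forall M, exists x, 0 <= x /\ M < g x).

Definition class_L (g : R -> R) : Prop :=
  cont_on_nonneg g /\
  (forall x, 0 <= x -> 0 <= g x) /\
  (forall x y, 0 <= x -> x <= y -> g y <= g x) /\
  (forall eps, 0 < eps -> exists T, forall t, T <= t -> g t < eps).

Definition class_KL (b : R -> R -> R) : Prop :=
  (forall t, 0 <= t -> class_K (fun r => b r t)) /\
  (forall r, 0 < r -> class_L (fun t => b r t)).

Definition is_linear_fun (g : R -> R) : Prop :=
  exists c, forall s, 0 <= s -> g s = c * s.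

Definition ISS_wrt (X V : NormedSpace) (I : InputSpace V)
    (S : ControlSystem X V I) (Uc : (Rnn -> V) -> Prop) : Prop :=
  exists beta gamma, class_KL beta /\ class_K gamma /\
    forall t x u, 0 <= t -> cs_adm S x u -> Uc u ->
      ns_norm (cs_phi S t x u) <= beta (ns_norm x) t + gamma (is_norm I u).

Arguments ISS_wrt {_ _ _} _ _.

Definition ISS (X V : NormedSpace) (I : InputSpace V)
    (S : ControlSystem X V I) : Prop :=
  ISS_wrt S (is_mem I).

Definition expISS_gain_wrt (X V : NormedSpace) (I : InputSpace V)
    (S : ControlSystem X V I) (Uc : (Rnn -> V) -> Prop)
    (gainOK : (R -> R) -> Prop) : Prop :=
  exists M a gamma, 0 < M /\ 0 < a /\ class_Kinf gamma /\ gainOK gamma /\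
    forall t x u, 0 <= t -> cs_adm S x u -> Uc u ->
      ns_norm (cs_phi S t x u) <= M * exp (- a * t) * ns_norm x + gamma (is_norm I u).

Arguments expISS_gain_wrt {_ _ _} _ _ _.

Definition expISS_wrt (X V : NormedSpace) (I : InputSpace V)
    (S : ControlSystem X V I) (Uc : (Rnn -> V) -> Prop) : Prop :=
  expISS_gain_wrt S Uc (fun _ => True).

Definition expISS_lin_wrt (X V : NormedSpace) (I : InputSpace V)
    (S : ControlSystem X V I) (Uc : (Rnn -> V) -> Prop) : Prop :=
  expISS_gain_wrt S Uc is_linear_fun.

Arguments ISS {_ _ _} _.
Arguments expISS_wrt {_ _ _} _ _.
Arguments expISS_lin_wrt {_ _ _} _ _.
Arguments is_input_cone {_} _ _.
Arguments input_le {_} _ _ _.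
Arguments cone_le {_} _ _ _.

(* Every input u is squeezed between inputs u_- <= u <= u_+ from U_c of norm at most eta |u|.
   Monotonicity squeezes the trajectory for u between those for u_- and u_+, so by (i)
   |phi(t,x,u)| <= rho (|phi(t,x,u_-)| + |phi(t,x,u_+)|), and each term on the right obeys the
   estimate assumed for inputs in U_c.  For general rho the sum is split with
   rho (a + b) <= rho (2a) + rho (2b); for linear rho = c * id it is kept whole, which
   preserves the exponential decay rate and, when eta is linear too, linearity of the gain. *)

From Stdlib Require Import Reals Lra.
Open Scope R_scope.

Lemma class_K_ge0 f x : class_K f -> 0 <= x -> 0 <= f x.
Proof. intros (_ & _ & Hf & _); auto. Qed.

Lemma class_K_le f x y : class_K f -> 0 <= x -> x <= y -> f x <= f y.
Proof.
  intros (_ & _ & _ & Hf) Hx Hxy.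
  destruct (Rle_lt_or_eq_dec _ _ Hxy) as [Hlt | <-]; [left; auto | lra].
Qed.

Lemma class_K_add_le f a b : class_K f -> 0 <= a -> 0 <= b ->
  f (a + b) <= f (2 * a) + f (2 * b).
Proof.
  intros Hf Ha Hb.
  assert (0 <= f (2 * a)) by (apply class_K_ge0; auto; lra).
  assert (0 <= f (2 * b)) by (apply class_K_ge0; auto; lra).
  destruct (Rle_dec a b).
  - assert (f (a + b) <= f (2 * b)) by (apply class_K_le; auto; lra). lra.
  - assert (f (a + b) <= f (2 * a)) by (apply class_K_le; auto; lra). lra.
Qed.

Lemma cont_on_nonneg_comp f g : cont_on_nonneg f -> cont_on_nonneg g ->
  (forall x, 0 <= x -> 0 <= g x) -> cont_on_nonneg (fun x => f (g x)).
Proof.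
  intros Hf Hg Hg0 x Hx eps Heps.
  destruct (Hf (g x) (Hg0 x Hx) eps Heps) as (d1 & Hd1 & H1).
  destruct (Hg x Hx d1 Hd1) as (d2 & Hd2 & H2).
  exists d2; split; auto.
Qed.

Lemma class_K_comp f g : class_K f -> class_K g -> class_K (fun x => f (g x)).
Proof.
  intros Hf Hg. pose proof Hf as (cf & f0 & f_ge0 & f_lt).
  pose proof Hg as (cg & g0 & g_ge0 & g_lt).
  split; [apply cont_on_nonneg_comp; auto | split; [rewrite g0; auto | split]].
  - intros x Hx; apply f_ge0, g_ge0; auto.
  - intros x y Hx Hxy; apply f_lt; auto.
Qed.

Lemma class_Kinf_comp f g : class_Kinf f -> class_Kinf g -> class_Kinf (fun x => f (g x)).
Proof.
  intros [Hf f_unb] [Hg g_unb]. split; [apply class_K_comp; auto|].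
  intros M. destruct (f_unb M) as (y & Hy & My). destruct (g_unb y) as (x & Hx & yx).
  exists x; split; auto.
  assert (f y <= f (g x)) by (apply class_K_le; auto; lra). lra.
Qed.

Lemma class_Kinf_scal c : 0 < c -> class_Kinf (fun x => c * x).
Proof.
  intros Hc. split; [split; [|split; [ring | split; intros; nra]] |].
  - intros x Hx eps Heps. exists (eps / c); split; [apply Rdiv_lt_0_compat; auto|].
    intros y Hy Hyx. replace (c * y - c * x) with (c * (y - x)) by ring.
    rewrite Rabs_mult, (Rabs_right c) by lra.
    apply (Rmult_lt_compat_l c) in Hyx; auto.
    replace (c * (eps / c)) with eps in Hyx by (field; lra). exact Hyx.
  - intros M. exists (Rabs M / c + 1).
    assert (0 <= Rabs M / c) by (apply Rmult_le_pos; [apply Rabs_pos | left; apply Rinv_0_lt_compat; lra]).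
    split; [lra|].
    replace (c * (Rabs M / c + 1)) with (Rabs M + c) by (field; lra).
    pose proof (Rle_abs M). lra.
Qed.

Lemma class_L_comp f g : class_K f -> class_L g -> class_L (fun t => f (g t)).
Proof.
  intros Hf Hg. pose proof Hf as (cf & f0 & _ & _).
  pose proof Hg as (cg & g_ge0 & g_decr & g_lim).
  split; [apply cont_on_nonneg_comp; auto | split; [|split]].
  - intros t Ht; apply class_K_ge0, g_ge0; auto.
  - intros s t Hs Hst; apply class_K_le, g_decr; auto. apply g_ge0; lra.
  - intros eps Heps. destruct (cf 0 (Rle_refl 0) eps Heps) as (d & Hd & Hcont).
    destruct (g_lim d Hd) as [T HT]. exists (Rmax T 0). intros t Ht.
    assert (Ht0 : 0 <= t) by (pose proof (Rmax_r T 0); lra).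
    assert (HgT : g t < d) by (apply HT; pose proof (Rmax_l T 0); lra).
    pose proof (g_ge0 t Ht0) as Hgt.
    assert (Hnear : Rabs (g t - 0) < d) by (rewrite Rminus_0_r, Rabs_right; lra).
    specialize (Hcont (g t) Hgt Hnear). rewrite f0, Rminus_0_r in Hcont.
    pose proof (Rle_abs (f (g t))). lra.
Qed.

Lemma class_KL_comp f b : class_K f -> class_KL b -> class_KL (fun r t => f (b r t)).
Proof.
  intros Hf [Hb_K Hb_L]. split.
  - intros t Ht. apply (class_K_comp f (fun r => b r t)); auto.
  - intros r Hr. apply (class_L_comp f (fun t => b r t)); auto.
Qed.

Lemma linear_class_K_slope_pos f c : class_K f ->
  (forall s, 0 <= s -> f s = c * s) -> 0 < c.
Proof.
  intros (_ & f0 & _ & f_lt) Hc. pose proof (f_lt 0 1 (Rle_refl 0) Rlt_0_1) as H01.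
  rewrite f0, (Hc 1) in H01 by lra. lra.
Qed.

Lemma is_linear_fun_scal_comp k g h : is_linear_fun g -> is_linear_fun h ->
  (forall s, 0 <= s -> 0 <= h s) -> is_linear_fun (fun s => k * g (h s)).
Proof.
  intros [d Hd] [e He] Hh. exists (k * d * e). intros s Hs.
  rewrite Hd by auto. rewrite He by auto. ring.
Qed.

Lemma ISS_wrt_sub (X V : NormedSpace) (I : InputSpace V) (S : ControlSystem X V I)
  (U1 U2 : (Rnn -> V) -> Prop) :
  (forall u, U2 u -> U1 u) -> ISS_wrt S U1 -> ISS_wrt S U2.
Proof.
  intros Hsub (beta & gamma & Hbeta & Hgamma & Hest).
  exists beta, gamma; split; [exact Hbeta | split; [exact Hgamma|]].
  intros; apply Hest; auto.
Qed.

Lemma expISS_gain_wrt_sub (X V : NormedSpace) (I : InputSpace V) (S : ControlSystem X V I)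
  (U1 U2 : (Rnn -> V) -> Prop) (P : (R -> R) -> Prop) :
  (forall u, U2 u -> U1 u) -> expISS_gain_wrt S U1 P -> expISS_gain_wrt S U2 P.
Proof.
  intros Hsub (M & a & gamma & HM & Ha & Hgamma & HP & Hest).
  exists M, a, gamma; do 4 (split; [assumption|]).
  intros; apply Hest; auto.
Qed.

Section Sandwich.

Variables (X V : NormedSpace) (I : InputSpace V) (S : ControlSystem X V I).
Variables (KX : X -> Prop) (KU : (Rnn -> V) -> Prop).
Hypothesis Hmono : forall t x u1 u2, 0 <= t -> cs_adm S x u1 -> cs_adm S x u2 ->
  input_le KU u1 u2 -> cone_le KX (cs_phi S t x u1) (cs_phi S t x u2).
Hypothesis Hadm : forall x u, is_mem I u -> cs_adm S x u.
Variable Uc : (Rnn -> V) -> Prop.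
Hypothesis HUc : forall u, Uc u -> is_mem I u.
Variable rho : R -> R.
Hypothesis Hrho : class_K rho.
Hypothesis Hi : forall xm x xp, cone_le KX xm x -> cone_le KX x xp ->
  ns_norm x <= rho (ns_norm xm + ns_norm xp).
Variable eta : R -> R.
Hypothesis Hii : forall u, is_mem I u -> exists um up,
  Uc um /\ Uc up /\ input_le KU um u /\ input_le KU u up /\
  is_norm I um <= eta (is_norm I u) /\ is_norm I up <= eta (is_norm I u).

Lemma norm_phi_sandwich t x u : 0 <= t -> is_mem I u -> exists um up,
  Uc um /\ Uc up /\
  is_norm I um <= eta (is_norm I u) /\ is_norm I up <= eta (is_norm I u) /\
  ns_norm (cs_phi S t x u) <= rho (ns_norm (cs_phi S t x um) + ns_norm (cs_phi S t x up)).
Proof.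
  intros Ht Hu. destruct (Hii u Hu) as (um & up & Hum & Hup & Hle_m & Hle_p & Hnm & Hnp).
  exists um, up. do 4 (split; [assumption|]).
  apply Hi; apply Hmono; auto.
Qed.

Lemma norm_phi_le_of_Uc_bound (F : R -> X -> R) (G : R -> R) : class_K G ->
  (forall t x u, 0 <= t -> Uc u -> ns_norm (cs_phi S t x u) <= F t x + G (is_norm I u)) ->
  forall t x u, 0 <= t -> is_mem I u ->
  ns_norm (cs_phi S t x u) <= rho (2 * F t x + 2 * G (eta (is_norm I u))).
Proof.
  intros HG Hest t x u Ht Hu.
  destruct (norm_phi_sandwich t x u Ht Hu) as (um & up & Hum & Hup & Hnm & Hnp & Hsand).
  assert (G (is_norm I um) <= G (eta (is_norm I u)))
    by (apply class_K_le; auto; apply is_norm_ge0; auto).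
  assert (G (is_norm I up) <= G (eta (is_norm I u)))
    by (apply class_K_le; auto; apply is_norm_ge0; auto).
  pose proof (Hest t x um Ht Hum). pose proof (Hest t x up Ht Hup).
  pose proof (ns_norm_ge0 _ (cs_phi S t x um)). pose proof (ns_norm_ge0 _ (cs_phi S t x up)).
  eapply Rle_trans; [exact Hsand|]. apply class_K_le; auto; lra.
Qed.

Lemma ISS_of_ISS_wrt : class_K eta -> ISS_wrt S Uc -> ISS S.
Proof.
  intros Heta (beta & gamma & Hbeta & Hgamma & Hest).
  assert (Hrho4 : class_K (fun y => rho (4 * y)))
    by (apply (class_K_comp rho (fun y => 4 * y)); auto; apply class_Kinf_scal; lra).
  exists (fun r t => rho (4 * beta r t)), (fun s => rho (4 * gamma (eta s))).
  split; [apply (class_KL_comp (fun y => rho (4 * y))); auto|].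
  split; [apply (class_K_comp (fun y => rho (4 * y))), class_K_comp; auto|].
  intros t x u Ht _ Hu.
  assert (Hbeta0 : 0 <= beta (ns_norm x) t)
    by (apply (class_K_ge0 (fun r => beta r t)); [apply (proj1 Hbeta t Ht) | apply ns_norm_ge0]).
  assert (Hgamma0 : 0 <= gamma (eta (is_norm I u)))
    by (apply class_K_ge0, class_K_ge0; auto; apply is_norm_ge0; auto).
  eapply Rle_trans.
  - apply (norm_phi_le_of_Uc_bound (fun t x => beta (ns_norm x) t) gamma); auto.
  - pose proof (class_K_add_le rho (2 * beta (ns_norm x) t) (2 * gamma (eta (is_norm I u)))
      Hrho ltac:(lra) ltac:(lra)) as Hsplit.
    replace (2 * (2 * beta (ns_norm x) t)) with (4 * beta (ns_norm x) t) in Hsplit by ring.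
    replace (2 * (2 * gamma (eta (is_norm I u)))) with (4 * gamma (eta (is_norm I u)))
      in Hsplit by ring.
    exact Hsplit.
Qed.

Lemma expISS_gain_of_wrt (c : R) (P : (R -> R) -> Prop) :
  (forall s, 0 <= s -> rho s = c * s) -> class_Kinf eta ->
  (forall g, class_Kinf g -> P g -> P (fun s => 2 * c * g (eta s))) ->
  expISS_gain_wrt S Uc P -> expISS_gain_wrt S (is_mem I) P.
Proof.
  intros Hc Heta HP (M & a & gamma & HM & Ha & Hgamma & HPgamma & Hest).
  pose proof (linear_class_K_slope_pos rho c Hrho Hc) as Hcpos.
  exists (2 * c * M), a, (fun s => 2 * c * gamma (eta s)).
  split; [apply Rmult_lt_0_compat; lra | split; [exact Ha | split; [| split; [auto|]]]].
  - apply (class_Kinf_comp (fun y => 2 * c * y)); [apply class_Kinf_scal; lra|].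
    apply class_Kinf_comp; auto.
  - intros t x u Ht _ Hu.
    assert (Hgamma0 : 0 <= gamma (eta (is_norm I u)))
      by (apply class_K_ge0, class_K_ge0; [apply Hgamma | apply Heta | apply is_norm_ge0; auto]).
    assert (Hdecay0 : 0 <= M * exp (- a * t) * ns_norm x).
    { pose proof (exp_pos (- a * t)). pose proof (ns_norm_ge0 _ x).
      apply Rmult_le_pos; [apply Rmult_le_pos|]; lra. }
    eapply Rle_trans.
    + apply (norm_phi_le_of_Uc_bound (fun t x => M * exp (- a * t) * ns_norm x) gamma);
        [apply Hgamma | intros; apply Hest; auto | exact Ht | exact Hu].
    + rewrite Hc by lra. lra.
Qed.

End Sandwich.

Theorem mainTheorem1
  (X V : NormedSpace) (I : InputSpace V) (S : ControlSystem X V I)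
  (KX : X -> Prop) (KU : (Rnn -> V) -> Prop)
  (HKX : is_pos_cone X KX) (HKU : is_input_cone I KU)
  (Hmono : forall t x u1 u2, 0 <= t -> cs_adm S x u1 -> cs_adm S x u2 ->
     input_le KU u1 u2 -> cone_le KX (cs_phi S t x u1) (cs_phi S t x u2))
  (Hadm : forall x u, cs_adm S x u <-> is_mem I u)
  (Uc : (Rnn -> V) -> Prop) (HUc : forall u, Uc u -> is_mem I u)
  (rho : R -> R) (Hrho : class_Kinf rho)
  (Hi : forall xm x xp, cone_le KX xm x -> cone_le KX x xp ->
     ns_norm x <= rho (ns_norm xm + ns_norm xp))
  (eta : R -> R) (Heta : class_Kinf eta)
  (Hii : forall u, is_mem I u -> exists um up,
     Uc um /\ Uc up /\ input_le KU um u /\ input_le KU u up /\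
     is_norm I um <= eta (is_norm I u) /\ is_norm I up <= eta (is_norm I u)) :
  (ISS S <-> ISS_wrt S Uc) /\
  (is_linear_fun rho ->
     (expISS_wrt S (is_mem I) <-> expISS_wrt S Uc) /\
     (expISS_lin_wrt S Uc -> is_linear_fun eta -> expISS_lin_wrt S (is_mem I))).
Proof.
  assert (Hadm_mem : forall x u, is_mem I u -> cs_adm S x u) by (intros; apply Hadm; auto).
  pose proof (ISS_of_ISS_wrt _ _ _ S KX KU Hmono Hadm_mem Uc HUc rho (proj1 Hrho) Hi eta Hii)
    as Htransfer_ISS.
  pose proof (expISS_gain_of_wrt _ _ _ S KX KU Hmono Hadm_mem Uc HUc rho (proj1 Hrho) Hi eta Hii)
    as Htransfer_expISS.
  split; [split|].
  - apply ISS_wrt_sub; auto.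
  - apply Htransfer_ISS, Heta.
  - intros [c Hc]. split; [split|].
    + apply expISS_gain_wrt_sub; auto.
    + apply (Htransfer_expISS c); auto.
    + intros Hlin Heta_lin. apply (Htransfer_expISS c); auto.
      intros g _ Hg. apply is_linear_fun_scal_comp; auto.
      intros s Hs; apply class_K_ge0; auto; apply Heta.
Qed.
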